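(* For every ordinal $\alpha$ there exists an irreducible $T_0$ space $X$ with $\mathrm{rank}_d(X)=\alpha$.
   Context: For a $T_0$ space $X$, consider subsets $A$ with $\overline A=\overline D$ for some directed $D\subseteq X$ (directed w.r.t. the specialization order); identify $A\sim B$ iff $\overline A=\overline B$. $D(X)$ is the set of classes with open sets $U^*=\{[A]\mid A\cap U\ne\emptyset\}$, $U$ open in $X$; $X$ embeds via $x\mapsto[\{x\}]$. $D_0(X)=X$, $D_{\beta+1}(X)=D(D_\beta(X))$, $D_\beta(X)=\bigcup_{\gamma<\beta}D_\gamma(X)$ for limit $\beta$. $\mathrm{rank}_d(X)$ is the least ordinal $\alpha$ with $D_\alpha(X)\cong D_{\alpha+1}(X)$. *)

From Stdlib Require Import Relations Wellfounded.

Set Implicit Arguments.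
Unset Strict Implicit.

Definition set (T : Type) := T -> Prop.

Definition is_topology {X : Type} (O : set (set X)) : Prop :=
  O (fun _ => True) /\ O (fun _ => False) /\
  (forall U V, O U -> O V -> O (fun x => U x /\ V x)) /\
  (forall F : set (set X), (forall U, F U -> O U) ->
      O (fun x => exists U, F U /\ U x)).

Definition is_closed {X : Type} (O : set (set X)) (C : set X) : Prop :=
  O (fun x => ~ C x).

Definition closure {X : Type} (O : set (set X)) (A : set X) : set X :=
  fun x => forall C, is_closed O C -> (forall y, A y -> C y) -> C x.

Definition T0 {X : Type} (O : set (set X)) : Prop :=
  forall x y : X, x <> y ->
    exists U, O U /\ ((U x /\ ~ U y) \/ (U y /\ ~ U x)).

Definition irreducible {X : Type} (O : set (set X)) : Prop :=
  (exists x : X, True) /\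
  forall U V, O U -> O V -> (exists x, U x) -> (exists x, V x) ->
    exists x, U x /\ V x.

(* ---------- The D-construction, realised inside the closed sets of X --------
   Every space D_beta(X) is realised as a family Y of (irreducible) closed
   subsets of X, carrying the subspace topology of the sobrification:
   its opens are  Y /\ <>U,  <>U = {C | C meets U},  U open in X.
   X itself is realised as the family of point closures. *)

Definition dia {X : Type} (U : set X) : set (set X) :=
  fun C => exists x, C x /\ U x.

Definition layer_opens {X : Type} (O : set (set X)) (Y : set (set X))
  : set (set (set X)) :=
  fun W => exists U, O U /\ forall C, W C <-> (Y C /\ dia U C).

Definition spec_le {X : Type} (O : set (set X)) (Y : set (set X))
  (C C' : set X) : Prop :=
  forall W, layer_opens O Y W -> W C -> W C'.

Definition directed_in {X : Type} (O : set (set X)) (Y : set (set X))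
  (D : set (set X)) : Prop :=
  (forall C, D C -> Y C) /\ (exists C, D C) /\
  forall a b, D a -> D b -> exists c, D c /\ spec_le O Y a c /\ spec_le O Y b c.

Definition layer0 {X : Type} (O : set (set X)) : set (set X) :=
  fun C => exists x, C = closure O (fun y => y = x).

(* D(Y): the class [A] (with cl_Y A = cl_Y D, D directed in Y) is identified
   with the closed set cl_X (union of D) of X; this is the canonical
   embedding D(Y) -> Y^s = X^s. *)
Definition Dop {X : Type} (O : set (set X)) (Y : set (set X)) : set (set X) :=
  fun C => exists D, directed_in O Y D /\
      C = closure O (fun x => exists E, D E /\ E x).

Definition homeomorphic {X : Type} (O : set (set X)) (Y1 Y2 : set (set X)) : Prop :=
  exists (f g : set X -> set X),
    (forall C, Y1 C -> Y2 (f C)) /\ (forall C, Y2 C -> Y1 (g C)) /\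
    (forall C, Y1 C -> g (f C) = C) /\ (forall C, Y2 C -> f (g C) = C) /\
    (forall W2, layer_opens O Y2 W2 ->
        exists W1, layer_opens O Y1 W1 /\ forall C, Y1 C -> (W1 C <-> W2 (f C))) /\
    (forall W1, layer_opens O Y1 W1 ->
        exists W2, layer_opens O Y2 W2 /\ forall C, Y2 C -> (W2 C <-> W1 (g C))).

Definition is_wellorder {W : Type} (lt : W -> W -> Prop) : Prop :=
  (forall a, ~ lt a a) /\
  (forall a b c, lt a b -> lt b c -> lt a c) /\
  (forall a b, lt a b \/ a = b \/ lt b a) /\
  well_founded lt.

(* the ordinal alpha = type of W, extended by the two points alpha, alpha+1 *)
Inductive ext (W : Type) : Type :=
| Old : W -> ext W
| Top : ext W
| Top1 : ext W.
Arguments Top {W}.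
Arguments Top1 {W}.

Definition ext_lt {W : Type} (lt : W -> W -> Prop) (i j : ext W) : Prop :=
  match i, j with
  | Old a, Old b => lt a b
  | Old _, Top => True
  | Old _, Top1 => True
  | Top, Top1 => True
  | _, _ => False
  end.

Definition imm_pred {I : Type} (lt : I -> I -> Prop) (j i : I) : Prop :=
  lt j i /\ ~ exists k, lt j k /\ lt k i.

Definition is_D_hierarchy {X I : Type} (O : set (set X)) (lt : I -> I -> Prop)
  (F : I -> set (set X)) : Prop :=
  forall i,
    ((~ exists j, lt j i) -> F i = layer0 O) /\
    (forall j, imm_pred lt j i -> F i = Dop O (F j)) /\
    ((exists j, lt j i) -> (~ exists j, imm_pred lt j i) ->
        F i = fun C => exists j, lt j i /\ F j C).

Definition rank_d_is {X W : Type} (O : set (set X)) (lt : W -> W -> Prop) : Prop :=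
  exists F : ext W -> set (set X),
    is_D_hierarchy O (ext_lt lt) F /\
    homeomorphic O (F Top) (F Top1) /\
    forall (w : W) (i : ext W), imm_pred (ext_lt lt) (Old w) i ->
      ~ homeomorphic O (F (Old w)) (F i).

From Stdlib Require Import List Arith Lia.
From Stdlib Require Import Classical FunctionalExtensionality PropExtensionality ProofIrrelevance.
Import ListNotations.

(** Given a well-order [(W, <)], build a forest with one tree per [v : W] and a
    common top.  Every node carries a stage: leaves have stage [None], the root
    of tree [v] has stage [v], and a node of stage [u] is the sup of an
    unbounded chain of children whose stages run through all stages below [u].
    The leaves and the top, with the Scott topology, form an irreducible T0
    space [X] (the top is in every nonempty open set) whose sobrification is
    the forest.  Closures of directed sets correspond to sups of directed
    families, and in a sup the stages of the family are cofinal below the stage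
    of the sup; hence [D_b(X)] consists of the elements of stage below [b], and
    [D_alpha(X) = D_(alpha+1)(X)].  A homeomorphism from [D_w(X)] onto a later
    level cannot raise stages (leaves are compact, nodes are sups of their
    children, and layer homeomorphisms preserve closures of directed unions),
    yet the root of tree [w] would have to be the image of an element of stage
    below [w]. *)

Lemma set_ext {A : Type} (P Q : set A) : (forall x, P x <-> Q x) -> P = Q.
Proof.
  intros h. apply functional_extensionality; intros x.
  apply propositional_extensionality, h.
Qed.

Lemma wf_exists_minimal {A : Type} (R : A -> A -> Prop) : well_founded R ->
  forall P : A -> Prop, (exists x, P x) -> exists x, P x /\ forall y, P y -> ~ R y x.
Proof.
  intros hwf P [x Px]. apply NNPP; intros hno.
  assert (none : forall z, ~ P z).
  { intros z. induction z as [z IH] using (well_founded_induction hwf).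
    intros Pz. apply hno. exists z. split; auto. intros y Py Ryz. exact (IH y Ryz Py). }
  exact (none x Px).
Qed.

Lemma cons_eq_app_cons {A : Type} (x j : A) (l r : list A) :
  x :: l = r ++ j :: l -> r = [] /\ x = j.
Proof.
  intros h. assert (hl := f_equal (@length A) h). rewrite length_app in hl. simpl in hl.
  destruct r as [|y r]; [inversion h; auto | simpl in hl; lia].
Qed.

Lemma cons_eq_app_cons_cases {A : Type} (k j : A) (t1 r t2 : list A) :
  k :: t1 = r ++ j :: t2 ->
  (r = [] /\ k = j /\ t1 = t2) \/ (exists r', r = k :: r' /\ t1 = r' ++ j :: t2).
Proof. destruct r as [|y r']; simpl; intros h; inversion h; subst; eauto. Qed.

Lemma app_eq_app_long_suffix {A : Type} (l1 l2 m1 m2 : list A) :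
  l1 ++ l2 = m1 ++ m2 -> length m2 <= length l2 -> exists z, l2 = z ++ m2.
Proof.
  intros h hlen. destruct (app_eq_app _ _ _ _ h) as [z [[_ ->]|[_ ->]]]; eauto.
  rewrite length_app in hlen. destruct z; [exists []; auto | simpl in hlen; lia].
Qed.

Lemma nat_exists_max (P : nat -> Prop) n :
  (exists m, P m) -> (forall m, P m -> m < n) -> exists M, P M /\ forall m, P m -> m <= M.
Proof.
  revert P. induction n as [|n IH]; intros P [m Pm] hlt; [specialize (hlt m Pm); lia|].
  destruct (classic (P n)) as [h|h].
  - exists n. split; auto. intros m' Pm'. specialize (hlt m' Pm'); lia.
  - apply IH; eauto. intros m' Pm'. specialize (hlt m' Pm').
    destruct (Nat.eq_dec m' n); subst; [contradiction | lia].
Qed.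

Section Topology.
Context {X : Type} (O : set (set X)).

Lemma closure_min (A C : set X) :
  is_closed O C -> (forall y, A y -> C y) -> forall x, closure O A x -> C x.
Proof. intros hC hAC x hx. exact (hx C hC hAC). Qed.

Lemma subset_closure (A : set X) x : A x -> closure O A x.
Proof. intros h C _ hAC. exact (hAC x h). Qed.

Lemma closure_closed (A : set X) : is_topology O -> is_closed O (closure O A).
Proof.
  intros [_ [_ [_ union_open]]]. unfold is_closed.
  set (F := fun U : set X =>
         exists C, is_closed O C /\ (forall y, A y -> C y) /\ U = (fun x => ~ C x)).
  replace (fun x => ~ closure O A x) with (fun x => exists U, F U /\ U x).
  { apply union_open. intros U [C [hC [_ ->]]]. exact hC. }
  apply set_ext; intros x; split.
  - intros [U [[C [hC [hAC ->]]] hx]] hcl. exact (hx (hcl C hC hAC)).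
  - intros hx. apply not_all_ex_not in hx as [C hx].
    apply imply_to_and in hx as [hC hx]. apply imply_to_and in hx as [hAC hx].
    exists (fun x => ~ C x). split; [exists C|]; auto.
Qed.

Lemma closure_of_closed (C : set X) : is_closed O C -> closure O C = C.
Proof.
  intros hC. apply set_ext; intros x; split.
  - apply closure_min; auto.
  - apply subset_closure.
Qed.

Lemma closure_meets_open (A U : set X) x :
  O U -> U x -> closure O A x -> exists y, A y /\ U y.
Proof.
  intros hU hx hcl. apply NNPP; intros hno.
  assert (hC : is_closed O (fun z => ~ U z)).
  { unfold is_closed. replace (fun z => ~ ~ U z) with U; auto.
    apply set_ext; intros z; tauto. }
  apply (hcl _ hC); auto. intros y hy hUy. apply hno; eauto.
Qed.

Lemma layer_open_avoiding (Y : set (set X)) (C : set X) :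
  is_closed O C -> layer_opens O Y (fun Z => Y Z /\ dia (fun z => ~ C z) Z).
Proof. intros hC. exists (fun z => ~ C z). split; [exact hC | tauto]. Qed.

Lemma spec_le_incl (Y : set (set X)) (C C' : set X) :
  is_closed O C' -> Y C -> Y C' -> spec_le O Y C C' -> forall x, C x -> C' x.
Proof.
  intros hC' hY hY' hle x hx. apply NNPP; intros hn.
  destruct (hle _ (layer_open_avoiding Y C' hC')) as [_ [y [hy hny]]].
  - split; [exact hY | exists x; auto].
  - exact (hny hy).
Qed.

Lemma incl_spec_le (Y : set (set X)) (C C' : set X) :
  Y C' -> (forall x, C x -> C' x) -> spec_le O Y C C'.
Proof.
  intros hY' hsub W0 [U [_ hW]] hWC. apply hW. apply hW in hWC as [_ [y [hy hUy]]].
  split; [exact hY' | exists y; auto].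
Qed.

Definition layer_continuous (Y1 Y2 : set (set X)) (h : set X -> set X) : Prop :=
  forall W2, layer_opens O Y2 W2 ->
    exists W1, layer_opens O Y1 W1 /\ forall C, Y1 C -> (W1 C <-> W2 (h C)).

Section LayerMap.
Variables (Y1 Y2 : set (set X)) (h : set X -> set X).
Hypothesis Y2_closed : forall C, Y2 C -> is_closed O C.
Hypothesis h_maps : forall C, Y1 C -> Y2 (h C).
Hypothesis h_cont : layer_continuous Y1 Y2 h.

Lemma layer_map_mono (C C' : set X) : Y1 C -> Y1 C' ->
  (forall x, C x -> C' x) -> forall x, h C x -> h C' x.
Proof.
  intros hC hC' hsub x hx. apply NNPP; intros hn.
  destruct (h_cont _ (layer_open_avoiding Y2 (h C') (Y2_closed _ (h_maps _ hC'))))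
    as [W1 [[U1 [_ hW1]] hcorr]].
  assert (hW1C : W1 C) by (apply hcorr; auto; split; auto; exists x; auto).
  apply hW1 in hW1C as [_ [y [hy hUy]]].
  assert (hW1C' : W1 C') by (apply hW1; split; auto; exists y; auto).
  apply hcorr in hW1C' as [_ [z [hz hnz]]]; auto.
Qed.

Lemma layer_map_closure_union (F : set (set X)) (C : set X) :
  is_topology O -> (forall E, F E -> Y1 E) -> Y1 C ->
  C = closure O (fun x => exists E, F E /\ E x) ->
  h C = closure O (fun x => exists E, (exists D, F D /\ E = h D) /\ E x).
Proof.
  intros htop hF hC eC. apply set_ext; intros x; split.
  - intros hx. apply NNPP; intros hn.
    set (K := closure O (fun x => exists E, (exists D, F D /\ E = h D) /\ E x)) in *.
    destruct (h_cont _ (layer_open_avoiding Y2 K (closure_closed _ htop)))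
      as [W1 [[U1 [hU1 hW1]] hcorr]].
    assert (hW1C : W1 C) by (apply hcorr; auto; split; auto; exists x; auto).
    apply hW1 in hW1C as [_ [y [hy hUy]]]. rewrite eC in hy.
    destruct (closure_meets_open _ _ y hU1 hUy hy) as [z [[E [hE hz]] hUz]].
    assert (hW1E : W1 E) by (apply hW1; split; auto; exists z; auto).
    apply hcorr in hW1E as [_ [z' [hz' hnz']]]; auto.
    apply hnz', subset_closure. exists (h E); eauto.
  - apply closure_min; [exact (Y2_closed _ (h_maps _ hC))|].
    intros y [E [[D [hD ->]] hy]]. apply (layer_map_mono D C); auto.
    intros z hz. rewrite eC. apply subset_closure. eauto.
Qed.

End LayerMap.

Lemma homeomorphic_refl (Y : set (set X)) : homeomorphic O Y Y.
Proof.
  exists (fun C => C), (fun C => C). repeat split; auto;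
    intros V hV; exists V; split; [exact hV | tauto | exact hV | tauto].
Qed.

End Topology.

Inductive tree (W : Type) : Type :=
| tree_top
| tree_node (v : W) (p : list (option W * nat)).
Arguments tree_top {W}.
Arguments tree_node {W} v p.

Section Construction.
Context {W : Type} (lt : W -> W -> Prop).
Hypothesis lt_wo : is_wellorder lt.

Lemma wo_irrefl a : ~ lt a a.
Proof. apply lt_wo. Qed.

Lemma wo_trans a b c : lt a b -> lt b c -> lt a c.
Proof. apply lt_wo. Qed.

Lemma wo_total a b : lt a b \/ a = b \/ lt b a.
Proof. apply lt_wo. Qed.

Lemma wo_wf : well_founded lt.
Proof. apply lt_wo. Qed.

(** Stage [None] is that of the points of [X]; an element of stage [Some u]
    enters the D-hierarchy at level [u + 1]. *)
Definition stage_lt (a b : option W) : Prop :=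
  match a, b with
  | None, Some _ => True
  | Some x, Some y => lt x y
  | _, _ => False
  end.

Definition stage_le a b := a = b \/ stage_lt a b.

Lemma stage_lt_irrefl a : ~ stage_lt a a.
Proof. destruct a; [apply wo_irrefl | auto]. Qed.

Lemma stage_lt_trans a b c : stage_lt a b -> stage_lt b c -> stage_lt a c.
Proof. destruct a, b, c; simpl; try tauto. apply wo_trans. Qed.

Lemma stage_lt_total a b : stage_lt a b \/ a = b \/ stage_lt b a.
Proof.
  destruct a as [a|], b as [b|]; simpl; auto.
  destruct (wo_total a b) as [h|[->|h]]; auto.
Qed.

Lemma stage_lt_wf : well_founded stage_lt.
Proof.
  assert (acc_None : Acc stage_lt None) by (constructor; intros [y|]; simpl; tauto).
  intros [a|]; auto.
  induction a as [a IH] using (well_founded_induction wo_wf).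
  constructor. intros [y|] hy; auto.
Qed.

Lemma not_stage_lt_None a : ~ stage_lt a None.
Proof. destruct a; simpl; auto. Qed.

Lemma stage_le_None a : stage_le a None -> a = None.
Proof. intros [h|h]; [exact h | contradiction (not_stage_lt_None a)]. Qed.

Lemma stage_le_lt_trans a b c : stage_le a b -> stage_lt b c -> stage_lt a c.
Proof. intros [->|h] h'; eauto using stage_lt_trans. Qed.

Lemma stage_lt_or_le a b : stage_lt a b \/ stage_le b a.
Proof. destruct (stage_lt_total a b) as [h|[->|h]]; unfold stage_le; auto. Qed.

Lemma stage_le_lt_false a b : stage_le a b -> stage_lt b a -> False.
Proof. intros h h'. apply (stage_lt_irrefl a). eapply stage_le_lt_trans; eauto. Qed.

Definition idx_lt (a b : option W * nat) : Prop :=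
  stage_lt (fst a) (fst b) \/ (fst a = fst b /\ snd a < snd b).

Definition idx_le a b := a = b \/ idx_lt a b.

Lemma idx_lt_irrefl a : ~ idx_lt a a.
Proof. intros [h|[_ h]]; [exact (stage_lt_irrefl _ h) | lia]. Qed.

Lemma idx_lt_trans a b c : idx_lt a b -> idx_lt b c -> idx_lt a c.
Proof.
  destruct a as [a n], b as [b m], c as [c k]; unfold idx_lt; simpl.
  intros [h|[-> h]] [h'|[-> h']]; eauto using stage_lt_trans.
  right; split; auto; lia.
Qed.

Lemma idx_lt_wf : well_founded idx_lt.
Proof.
  intros [a n]. revert n.
  induction a as [a IHa] using (well_founded_induction stage_lt_wf).
  intros n. induction n as [n IHn] using (well_founded_induction lt_wf).
  constructor. intros [b m] [h|[h1 h2]]; simpl in *; [|subst]; auto.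
Qed.

Lemma idx_lt_or_le a b : idx_lt a b \/ idx_le b a.
Proof.
  destruct a as [a n], b as [b m]; unfold idx_le, idx_lt; simpl.
  destruct (stage_lt_total a b) as [h|[->|h]]; auto.
  destruct (Nat.lt_trichotomy n m) as [h|[->|h]]; auto.
Qed.

Lemma idx_le_trans a b c : idx_le a b -> idx_le b c -> idx_le a c.
Proof. intros [->|h] [<-|h']; unfold idx_le; eauto using idx_lt_trans. Qed.

Lemma idx_le_antisym a b : idx_le a b -> idx_le b a -> a = b.
Proof.
  intros [h|h] [h'|h']; auto.
  contradiction (idx_lt_irrefl a); eauto using idx_lt_trans.
Qed.

Lemma idx_le_fst a b : idx_le a b -> stage_le (fst a) (fst b).
Proof. intros [->|[h|[h _]]]; unfold stage_le; auto. Qed.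

(** A node [tree_node v q] lies in the tree rooted at [v]; the path [q] is read
    from the leaf end, so [j :: t] is the child of [t] with index [j]. *)
Definition path_stage (v : W) (q : list (option W * nat)) : option W :=
  match q with [] => Some v | j :: _ => fst j end.

Definition stage (e : tree W) : option W :=
  match e with tree_top => None | tree_node v q => path_stage v q end.

Fixpoint valid_path (v : W) (q : list (option W * nat)) : Prop :=
  match q with
  | [] => True
  | j :: t => valid_path v t /\ stage_lt (fst j) (path_stage v t)
  end.

Definition valid (e : tree W) : Prop :=
  match e with tree_top => True | tree_node v q => valid_path v q end.

Definition path_le (p q : list (option W * nat)) : Prop :=
  q = [] \/ exists r j k t, p = r ++ j :: t /\ q = k :: t /\ idx_le j k.

Definition tree_le (a b : tree W) : Prop :=
  match a, b with
  | _, tree_top => True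
  | tree_node v p, tree_node v' q => v = v' /\ path_le p q
  | tree_top, tree_node _ _ => False
  end.

Lemma path_le_refl p : path_le p p.
Proof.
  destruct p as [|j t]; [left; auto|].
  right. exists [], j, j, t. repeat split; left; auto.
Qed.

Lemma path_le_nil p : path_le p [].
Proof. left; auto. Qed.

Lemma path_le_child k t : path_le (k :: t) t.
Proof.
  destruct t as [|j t]; [left; auto|].
  right. exists [k], j, j, t. repeat split; left; auto.
Qed.

Lemma path_le_sibling a b t : idx_le a b -> path_le (a :: t) (b :: t).
Proof. intros h. right. exists [], a, b, t. auto. Qed.

Lemma path_le_sibling_inv a b t : path_le (a :: t) (b :: t) -> idx_le a b.
Proof.
  intros [h|[r [j [k [t' [e1 [e2 h]]]]]]]; [discriminate|].
  injection e2 as <- <-. destruct (cons_eq_app_cons _ _ _ _ e1) as [-> <-]. exact h.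
Qed.

Lemma path_le_trans p q s : path_le p q -> path_le q s -> path_le p s.
Proof.
  intros [->|[r1 [j1 [k1 [t1 [-> [-> h1]]]]]]] [->|[r2 [j2 [k2 [t2 [e3 [-> h2]]]]]]];
    try (left; reflexivity); [destruct r2; discriminate|].
  right. destruct (cons_eq_app_cons_cases _ _ _ _ _ e3) as [[-> [-> ->]]|[r' [-> ->]]].
  - exists r1, j1, k2, t2. eauto using idx_le_trans.
  - exists (r1 ++ j1 :: r'), j2, k2, t2. rewrite <- app_assoc. auto.
Qed.

Lemma path_le_length p q : path_le p q -> length q <= length p.
Proof.
  intros [->|[r [j [k [t [-> [-> _]]]]]]]; simpl; [lia|].
  rewrite length_app; simpl; lia.
Qed.

Lemma path_le_antisym p q : path_le p q -> path_le q p -> p = q.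
Proof.
  intros h1 h2. assert (l1 := path_le_length _ _ h1). assert (l2 := path_le_length _ _ h2).
  destruct h1 as [->|[r [j [k [t [-> [-> h]]]]]]].
  - destruct p; simpl in l2; [auto | lia].
  - rewrite length_app in l2. destruct r; simpl in l2; [|lia]. simpl in *.
    f_equal. apply idx_le_antisym; [exact h | exact (path_le_sibling_inv _ _ _ h2)].
Qed.

Lemma tree_le_refl a : tree_le a a.
Proof. destruct a; simpl; auto using path_le_refl. Qed.

Lemma tree_le_trans a b c : tree_le a b -> tree_le b c -> tree_le a c.
Proof.
  destruct a, b, c; simpl; try tauto.
  intros [-> h1] [-> h2]. eauto using path_le_trans.
Qed.

Lemma tree_le_antisym a b : tree_le a b -> tree_le b a -> a = b.
Proof.
  destruct a as [|v p], b as [|v' q]; simpl; try tauto.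
  intros [-> h1] [_ h2]. f_equal. auto using path_le_antisym.
Qed.

Lemma tree_le_top a : tree_le a tree_top.
Proof. destruct a; simpl; auto. Qed.

Lemma tree_le_node_inv a v q :
  tree_le a (tree_node v q) -> exists p, a = tree_node v p /\ path_le p q.
Proof. destruct a as [|v' p]; simpl; [tauto|]. intros [-> h]; eauto. Qed.

Definition tree_directed (D : tree W -> Prop) : Prop :=
  (exists d, D d) /\ (forall d, D d -> valid d) /\
  (forall a b, D a -> D b -> exists c, D c /\ tree_le a c /\ tree_le b c).

Definition is_tree_sup (D : tree W -> Prop) (s : tree W) : Prop :=
  valid s /\ (forall d, D d -> tree_le d s) /\
  (forall b, valid b -> (forall d, D d -> tree_le d b) -> tree_le s b).

Definition stage_cofinal (D : tree W -> Prop) (s : tree W) : Prop :=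
  forall g, stage_lt (Some g) (stage s) -> exists d, D d /\ stage_le (Some g) (stage d).

Definition children (v : W) (q : list (option W * nat)) (c : tree W) : Prop :=
  exists s n, c = tree_node v ((s, n) :: q) /\ stage_lt s (path_stage v q).

(** The [nat] component of the indices makes the children of a node a chain
    without maximum. *)
Lemma children_directed_sup v q u : valid_path v q -> path_stage v q = Some u ->
  tree_directed (children v q) /\ is_tree_sup (children v q) (tree_node v q).
Proof.
  intros hv hs.
  assert (child0 : children v q (tree_node v ((None, 0) :: q)))
    by (exists None, 0; rewrite hs; simpl; auto).
  split; [split; [|split]|split; [|split]].
  - eauto.
  - intros d [s [n [-> h]]]. simpl. auto.
  - intros a b [s1 [n1 [-> h1]]] [s2 [n2 [-> h2]]].
    destruct (idx_lt_or_le (s1, n1) (s2, n2)) as [h|h].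
    + exists (tree_node v ((s2, n2) :: q)). split; [exists s2, n2; auto|].
      simpl. split; split; auto; apply path_le_sibling; [right; exact h | left; auto].
    + exists (tree_node v ((s1, n1) :: q)). split; [exists s1, n1; auto|].
      simpl. split; split; auto; apply path_le_sibling; [left; auto | exact h].
  - exact hv.
  - intros d [s [n [-> h]]]. simpl; split; auto using path_le_child.
  - intros b hb hub. destruct b as [|v' qb]; [apply tree_le_top|].
    destruct (hub _ child0) as [<- h]. simpl. split; auto.
    destruct h as [->|[r [j [k [t [e1 [-> hjk]]]]]]]; [apply path_le_nil|].
    destruct (cons_eq_app_cons_cases _ _ _ _ _ e1) as [[-> [<- <-]]|[r' [-> ->]]].
    + exfalso. destruct hb as [_ hb].
      assert (next : children v q (tree_node v ((fst k, S (snd k)) :: q)))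
        by (exists (fst k), (S (snd k)); auto).
      destruct (hub _ next) as [_ h]. apply path_le_sibling_inv in h.
      destruct h as [h|[h|[_ h]]].
      * destruct k; injection h; lia.
      * exact (stage_lt_irrefl _ h).
      * simpl in h; lia.
    + right. exists r', j, k, t. auto.
Qed.

Lemma valid_path_None_leaf v r j t :
  valid_path v (r ++ j :: t) -> fst j = None -> r = [].
Proof.
  induction r as [|y r IH]; auto. simpl. intros [h1 h2] hj.
  rewrite (IH h1 hj) in h2. simpl in h2. rewrite hj in h2.
  contradiction (not_stage_lt_None _ h2).
Qed.

Lemma path_le_None_leaf_inv v p n t : valid_path v p ->
  path_le p ((None, n) :: t) -> exists m, m <= n /\ p = (None, m) :: t.
Proof.
  intros hv [h|[r [j [k [t' [-> [e hjk]]]]]]]; [discriminate|].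
  injection e as <- <-. pose proof (idx_le_fst _ _ hjk) as hj. simpl in hj.
  apply stage_le_None in hj. rewrite (valid_path_None_leaf _ _ _ _ hv hj). simpl.
  destruct j as [s m]. simpl in hj; subst s. exists m. split; auto.
  destruct hjk as [h|[h|[_ h]]]; [injection h; lia | contradiction (not_stage_lt_None _ h)
                                 | simpl in h; lia].
Qed.

Lemma point_sup_mem D x :
  stage x = None -> tree_directed D -> is_tree_sup D x -> D x.
Proof.
  intros hx [[d0 hd0] [hval hdir]] [xv [hub hleast]].
  apply NNPP; intros hnx. destruct x as [|v q].
  - destruct d0 as [|v p0]; [contradiction|].
    enough (h : tree_le tree_top (tree_node v [])) by exact h.
    apply hleast; [exact I|]. intros d hd.
    destruct (hdir d _ hd hd0) as [[|v' qc] [hc [h1 h2]]]; [contradiction|].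
    destruct h2 as [<- _]. destruct (tree_le_node_inv _ _ _ h1) as [pd [-> _]].
    simpl. auto using path_le_nil.
  - destruct q as [|[s n] t]; [discriminate|]. simpl in hx; subst s.
    assert (hform : forall d, D d -> exists m, m < n /\ d = tree_node v ((None, m) :: t)).
    { intros d hd. destruct (tree_le_node_inv _ _ _ (hub d hd)) as [p [-> hp]].
      destruct (path_le_None_leaf_inv _ _ _ _ (hval _ hd) hp) as [m [hm ->]].
      exists m. split; auto. destruct (Nat.eq_dec m n); [subst; contradiction | lia]. }
    destruct (nat_exists_max (fun m => D (tree_node v ((None, m) :: t))) n)
      as [M [hM hMmax]].
    + destruct (hform d0 hd0) as [m [_ ->]]; eauto.
    + intros m hm. destruct (hform _ hm) as [m' [h e]]. injection e as ->. exact h.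
    + assert (h : tree_le (tree_node v ((None, n) :: t)) (tree_node v ((None, M) :: t))).
      { apply hleast; [exact (hval _ hM)|]. intros d hd.
        destruct (hform d hd) as [m [_ ->]]. simpl. split; auto. apply path_le_sibling.
        destruct (Nat.eq_dec m M) as [->|hne]; [left; auto|].
        right; right; simpl; split; auto. specialize (hMmax m hd). lia. }
      destruct h as [_ h]. apply path_le_sibling_inv in h.
      destruct (hform _ hM) as [m [hm e]]. injection e as ->.
      destruct h as [h|[h|[_ h]]]; [injection h; lia | contradiction (not_stage_lt_None _ h)
                                   | simpl in h; lia].
Qed.

Lemma sibling_family_upper_bound D v t k0 : D (tree_node v (k0 :: t)) ->
  forall b, valid b -> (forall d, D d -> tree_le d b) ->
  tree_le (tree_node v t) b \/
  exists k', b = tree_node v (k' :: t) /\ stage_lt (fst k') (path_stage v t) /\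
             forall k, D (tree_node v (k :: t)) -> idx_le k k'.
Proof.
  intros hk0 b hb hbD. destruct b as [|v' qb]; [left; apply tree_le_top|].
  destruct (hbD _ hk0) as [<- h0].
  destruct h0 as [->|[r [j [k' [t' [e1 [-> hjk]]]]]]]; [left; simpl; auto using path_le_nil|].
  destruct (cons_eq_app_cons_cases _ _ _ _ _ e1) as [[-> [<- <-]]|[r' [-> ->]]].
  - right. exists k'. split; auto. split; [exact (proj2 hb)|].
    intros k hk. exact (path_le_sibling_inv _ _ _ (proj2 (hbD _ hk))).
  - left. simpl. split; auto. right. exists r', j, k', t'. auto.
Qed.

Lemma sibling_family_sup D v t k0 :
  (forall d, D d -> valid d) -> D (tree_node v (k0 :: t)) ->
  (forall d, D d -> exists k, D (tree_node v (k :: t)) /\ tree_le d (tree_node v (k :: t))) ->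
  exists s, is_tree_sup D s /\ stage_cofinal D s.
Proof.
  intros hval hk0 hkey. destruct (hval _ hk0) as [hvt hk0t].
  set (J := fun k => D (tree_node v (k :: t))).
  set (UB := fun k' => stage_lt (fst k') (path_stage v t) /\ forall k, J k -> idx_le k k').
  pose proof (sibling_family_upper_bound D v t k0 hk0) as upper_bounds.
  assert (cofinal : forall g, ~ (forall k, J k -> idx_le k (Some g, 0)) ->
            exists d, D d /\ stage_le (Some g) (stage d)).
  { intros g h. apply NNPP; intros h2. apply h. intros k hk.
    destruct (idx_lt_or_le (Some g, 0) k) as [h3|h3]; auto.
    exfalso; apply h2. exists (tree_node v (k :: t)). split; auto.
    apply (idx_le_fst (Some g, 0)). right; exact h3. }
  destruct (classic (exists k', UB k')) as [hUB|hUB].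
  - destruct (wf_exists_minimal _ idx_lt_wf UB hUB) as [ks [hks hksmin]].
    assert (least : forall k', UB k' -> idx_le ks k').
    { intros k' hk'. destruct (idx_lt_or_le k' ks) as [h|h]; auto.
      contradiction (hksmin k' hk' h). }
    exists (tree_node v (ks :: t)). split; [split; [|split]|].
    + split; [exact hvt | exact (proj1 hks)].
    + intros d hd. destruct (hkey d hd) as [k [hk h]]. eapply tree_le_trans; [exact h|].
      simpl; split; auto. apply path_le_sibling, (proj2 hks), hk.
    + intros b hb hbD. destruct (upper_bounds b hb hbD) as [h|[k' [-> hk']]].
      * eapply tree_le_trans; [|exact h]. simpl; auto using path_le_child.
      * simpl; split; auto. apply path_le_sibling, least, hk'.
    + intros g hg. change (stage_lt (Some g) (fst ks)) in hg. apply cofinal. intros hbound.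
      apply (stage_le_lt_false (fst ks) (Some g)); [|exact hg].
      apply (idx_le_fst _ (Some g, 0)), least. split; [|exact hbound].
      exact (stage_lt_trans _ _ _ hg (proj1 hks)).
  - exists (tree_node v t). split; [split; [|split]|].
    + exact hvt.
    + intros d hd. destruct (hkey d hd) as [k [hk h]]. eapply tree_le_trans; [exact h|].
      simpl; auto using path_le_child.
    + intros b hb hbD. destruct (upper_bounds b hb hbD) as [h|[k' [-> hk']]]; auto.
      contradiction hUB; eauto.
    + intros g hg. apply cofinal. intros hbound. apply hUB.
      exists (Some g, 0). split; [exact hg | exact hbound].
Qed.

Lemma directed_below_common_node D v p0 :
  tree_directed D -> ~ D tree_top -> D (tree_node v p0) ->
  forall d, D d -> exists q, D (tree_node v q) /\ path_le p0 q /\ tree_le d (tree_node v q).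
Proof.
  intros [_ [_ hdir]] htop hp0 d hd.
  destruct (hdir d _ hd hp0) as [[|v' q] [hc [h1 h2]]]; [contradiction|].
  destruct h2 as [<- h2]. eauto.
Qed.

Lemma tree_sup_exists D : tree_directed D -> exists s, is_tree_sup D s /\ stage_cofinal D s.
Proof.
  intros hD. pose proof hD as [[d0 hd0] [hval _]].
  destruct (classic (D tree_top)) as [htop|htop].
  { exists tree_top. split; [split; [exact I|split]|].
    - intros; apply tree_le_top.
    - intros b _ hb. exact (hb _ htop).
    - intros g h. contradiction (not_stage_lt_None _ h). }
  destruct d0 as [|v p0]; [contradiction|].
  pose proof (directed_below_common_node D v p0 hD htop hd0) as hnode.
  destruct (wf_exists_minimal (fun q1 q2 : list (option W * nat) => length q1 < length q2)
              (well_founded_ltof _ (@length _))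
              (fun q => D (tree_node v q) /\ path_le p0 q)) as [qL [[hqL hp0qL] hmin]].
  { exists p0. split; auto using path_le_refl. }
  destruct qL as [|k0 t].
  - exists (tree_node v []). split; [split; [exact I|split]|].
    + intros d hd. destruct (hnode d hd) as [q [_ [_ h]]].
      eapply tree_le_trans; [exact h|]. simpl; auto using path_le_nil.
    + intros b _ hb. exact (hb _ hqL).
    + intros g hg. exists (tree_node v []). split; [exact hqL | right; exact hg].
  - apply (sibling_family_sup D v t k0 hval hqL).
    intros d hd. destruct (hnode d hd) as [q [hq [hp0q hdq]]].
    assert (hlen : ~ length q < length (k0 :: t)) by (apply hmin; auto).
    destruct hp0qL as [e|[r0 [j0 [k0' [t' [ep0 [ek hj0]]]]]]]; [discriminate|].
    injection ek as <- <-.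
    destruct hp0q as [->|[r [j [k [t1 [ep [-> hjk]]]]]]]; [simpl in hlen; lia|].
    simpl in hlen.
    destruct (app_eq_app_long_suffix r (j :: t1) r0 (j0 :: t)) as [[|y z] hz];
      [congruence | simpl; lia | |]; simpl in hz; injection hz as -> ->; [exists k; auto|].
    exists k0. split; [exact hqL|]. eapply tree_le_trans; [exact hdq|].
    simpl. split; auto. right. exists (k :: z), j0, k0, t. auto.
Qed.

(** [X] is the set of points (the top among them) with the trace of the Scott
    topology; the tree is its sobrification, [e] standing for [down e]. *)
Definition scott_closed (K : tree W -> Prop) : Prop :=
  (forall a b, valid a -> valid b -> tree_le a b -> K b -> K a) /\
  (forall D s, tree_directed D -> is_tree_sup D s -> (forall d, D d -> K d) -> K s).

Definition point : Type := {e : tree W | valid e /\ stage e = None}.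

Definition scott_opens : set (set point) :=
  fun U => exists K, scott_closed K /\ forall x, U x <-> ~ K (proj1_sig x).

Definition down (e : tree W) : set point := fun x => tree_le (proj1_sig x) e.

Lemma scott_opens_topology : is_topology scott_opens.
Proof.
  split; [|split; [|split]].
  - exists (fun _ => False). split; [split|]; [auto | | tauto].
    intros D s [[d hd] _] _ h. exact (h d hd).
  - exists (fun _ => True). split; [split|]; auto. tauto.
  - intros U V [K1 [[dn1 sup1] h1]] [K2 [[dn2 sup2] h2]].
    exists (fun e => K1 e \/ K2 e). split; [split|].
    + intros a b va vb hab [h|h]; [left; eapply dn1 | right; eapply dn2]; eauto.
    + intros D s hD hs hK.
      destruct (classic (forall d, D d -> K1 d)) as [a1|a1]; [left; eapply sup1; eauto|].
      destruct (classic (forall d, D d -> K2 d)) as [a2|a2]; [right; eapply sup2; eauto|].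
      apply not_all_ex_not in a1 as [x1 a1]. apply imply_to_and in a1 as [hx1 nx1].
      apply not_all_ex_not in a2 as [x2 a2]. apply imply_to_and in a2 as [hx2 nx2].
      exfalso. destruct hD as [_ [hv hdir]].
      destruct (hdir x1 x2 hx1 hx2) as [c [hc [l1 l2]]].
      destruct (hK c hc) as [k|k]; [apply nx1; apply (dn1 x1 c) | apply nx2; apply (dn2 x2 c)];
        auto.
    + intros x. rewrite h1, h2. tauto.
  - intros F hF.
    exists (fun e => forall U K, F U -> scott_closed K ->
                     (forall x, U x <-> ~ K (proj1_sig x)) -> K e).
    split; [split|].
    + intros a b va vb hab hb U K hU hK hUK. apply (proj1 hK a b va vb hab), (hb U K hU hK hUK).
    + intros D s hD hs hDK U K hU hK hUK. apply (proj2 hK D s hD hs).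
      intros d hd. exact (hDK d hd U K hU hK hUK).
    + intros x. split.
      * intros [U [hU hx]] h. destruct (hF U hU) as [K [hK hUK]].
        apply (proj1 (hUK x) hx). exact (h U K hU hK hUK).
      * intros h. apply NNPP; intros h2. apply h. intros U K hU hK hUK.
        apply NNPP; intros h3. apply h2. exists U. split; [exact hU | apply hUK, h3].
Qed.

Lemma scott_closed_set_iff (C : set point) :
  is_closed scott_opens C <-> exists K, scott_closed K /\ forall x, C x <-> K (proj1_sig x).
Proof.
  unfold is_closed, scott_opens.
  split; intros [K [hK h]]; exists K; split; auto; intros x; [|rewrite h; tauto].
  specialize (h x). split; intros h2; apply NNPP; intros h3; apply h in h3; auto.
Qed.

Lemma scott_closed_down e : valid e -> scott_closed (fun a => tree_le a e).
Proof.
  intros ve. split.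
  - intros a b _ _ hab hb. eauto using tree_le_trans.
  - intros D s _ [_ [_ hleast]] hD. exact (hleast e ve hD).
Qed.

Lemma down_closed e : valid e -> is_closed scott_opens (down e).
Proof.
  intros ve. apply scott_closed_set_iff.
  exists (fun a => tree_le a e). split; [apply scott_closed_down; auto | tauto].
Qed.

(** Every element is reached from the points by iterated directed sups. *)
Lemma scott_closed_points_below K e : scott_closed K -> valid e ->
  (forall x : point, tree_le (proj1_sig x) e -> K (proj1_sig x)) -> K e.
Proof.
  intros hK. remember (stage e) as s eqn:hs. revert e hs.
  induction s as [s IH] using (well_founded_induction stage_lt_wf).
  intros e hs ve hpts. destruct s as [u|].
  - destruct e as [|v q]; [discriminate|]. simpl in hs.
    destruct (children_directed_sup v q u ve (eq_sym hs)) as [hD hsup].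
    apply (proj2 hK _ _ hD hsup). intros c [s' [n [-> hs']]].
    apply (IH s'); [rewrite hs; exact hs' | reflexivity | split; auto |].
    intros x hx. apply hpts. eapply tree_le_trans; [exact hx|].
    simpl; auto using path_le_child.
  - exact (hpts (exist _ e (conj ve (eq_sym hs))) (tree_le_refl _)).
Qed.

Lemma down_incl_le a b : valid a -> valid b ->
  (forall x, down a x -> down b x) -> tree_le a b.
Proof.
  intros va vb h. apply (scott_closed_points_below (fun e => tree_le e b));
    auto using scott_closed_down.
Qed.

Lemma down_inj a b : valid a -> valid b -> down a = down b -> a = b.
Proof.
  intros va vb h. apply tree_le_antisym; apply down_incl_le; auto; intros x; rewrite h; auto.
Qed.

Lemma closure_point (x : point) : closure scott_opens (fun y => y = x) = down (proj1_sig x).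
Proof.
  apply set_ext; intros y; split.
  - apply closure_min; [apply down_closed, (proj2_sig x)|].
    intros z ->. apply tree_le_refl.
  - intros hy C hC hxC. apply scott_closed_set_iff in hC as [K [[hdn _] hK]].
    apply hK. apply (hdn _ (proj1_sig x)); [apply (proj2_sig y) | apply (proj2_sig x) | exact hy |].
    apply hK, hxC. reflexivity.
Qed.

Lemma closure_directed_union D s : tree_directed D -> is_tree_sup D s ->
  closure scott_opens (fun x => exists d, D d /\ down d x) = down s.
Proof.
  intros hD hs. apply set_ext; intros y; split.
  - apply closure_min; [apply down_closed, hs|].
    intros z [d [hd hz]]. eapply tree_le_trans; [exact hz | apply hs, hd].
  - intros hy C hC hDC. apply scott_closed_set_iff in hC as [K [hK hCK]].
    apply hCK. apply (proj1 hK _ s); [apply (proj2_sig y) | apply hs | exact hy |].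
    apply (proj2 hK D s hD hs). intros d hd.
    apply (scott_closed_points_below K d hK (proj1 (proj2 hD) d hd)).
    intros x hx. apply hCK, hDC. exists d; auto.
Qed.

Lemma scott_T0 : T0 scott_opens.
Proof.
  intros x y hxy.
  assert (hne : proj1_sig x <> proj1_sig y).
  { intros e. apply hxy. destruct x, y; simpl in e; subst. f_equal. apply proof_irrelevance. }
  assert (open_outside : forall z : point,
            scott_opens (fun w => ~ tree_le (proj1_sig w) (proj1_sig z))).
  { intros z. exists (fun a => tree_le a (proj1_sig z)).
    split; [apply scott_closed_down, (proj2_sig z) | tauto]. }
  destruct (classic (tree_le (proj1_sig x) (proj1_sig y))) as [h1|h1].
  - exists (fun w => ~ tree_le (proj1_sig w) (proj1_sig x)). split; [apply open_outside|].
    right. split; [intros h2; apply hne; apply tree_le_antisym; auto|].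
    intros h; apply h, tree_le_refl.
  - exists (fun w => ~ tree_le (proj1_sig w) (proj1_sig y)). split; [apply open_outside|].
    left. split; [exact h1|]. intros h; apply h, tree_le_refl.
Qed.

Definition top_point : point := exist _ tree_top (conj I eq_refl).

Lemma scott_irreducible : irreducible scott_opens.
Proof.
  assert (top_mem : forall U, scott_opens U -> (exists x, U x) -> U top_point).
  { intros U [K [[hdn _] hU]] [x hx]. apply hU. intros htop.
    apply (proj1 (hU x) hx), (hdn _ tree_top); [apply (proj2_sig x) | exact I | |exact htop].
    apply tree_le_top. }
  split; [exists top_point; auto|].
  intros U V hU hV hUne hVne. exists top_point. split; apply top_mem; auto.
Qed.

Definition down_preimage (F : set (set point)) (e : tree W) : Prop := valid e /\ F (down e).

Lemma closure_down_family (F : set (set point)) :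
  (forall Z, F Z -> exists e, valid e /\ Z = down e) -> (exists Z, F Z) ->
  (forall Z1 Z2, F Z1 -> F Z2 ->
     exists Z3, F Z3 /\ (forall x, Z1 x -> Z3 x) /\ (forall x, Z2 x -> Z3 x)) ->
  tree_directed (down_preimage F) /\
  exists s, closure scott_opens (fun x => exists E, F E /\ E x) = down s /\
    is_tree_sup (down_preimage F) s /\ stage_cofinal (down_preimage F) s.
Proof.
  intros hdown [Z0 hZ0] hdir.
  assert (hD : tree_directed (down_preimage F)).
  { split; [|split].
    - destruct (hdown Z0 hZ0) as [e [ve ->]]. exists e. split; auto.
    - intros d [vd _]. exact vd.
    - intros a b [va ha] [vb hb]. destruct (hdir _ _ ha hb) as [Z [hZ [h1 h2]]].
      destruct (hdown Z hZ) as [e [ve ->]].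
      exists e. repeat split; auto; apply down_incl_le; auto. }
  split; [exact hD|].
  destruct (tree_sup_exists _ hD) as [s [hs hcof]].
  exists s. split; [|split; auto].
  rewrite <- (closure_directed_union _ _ hD hs). f_equal.
  apply set_ext; intros x; split.
  - intros [E [hE hx]]. destruct (hdown E hE) as [e [ve ->]]. exists e. repeat split; auto.
  - intros [d [[_ hd] hx]]. exists (down d). auto.
Qed.

Definition below_level (s : option W) (b : ext W) : Prop :=
  match s with None => True | Some u => ext_lt lt (Old u) b end.

Definition level (b : ext W) : set (set point) :=
  fun C => exists e, valid e /\ below_level (stage e) b /\ C = down e.

Lemma below_level_stage_le_false s g : below_level s (Old g) -> stage_le (Some g) s -> False.
Proof.
  destruct s as [u|]; simpl; intros h1 h2.
  - destruct h2 as [h2|h2]; [injection h2 as ->; exact (wo_irrefl _ h1)|].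
    exact (wo_irrefl g (wo_trans _ _ _ h2 h1)).
  - discriminate (stage_le_None _ h2).
Qed.

Lemma below_level_child s u b : stage_lt s (Some u) -> below_level (Some u) b -> below_level s b.
Proof.
  destruct s as [s|]; simpl; auto. intros h1 h2.
  destruct b as [b| |]; simpl in *; eauto using wo_trans.
Qed.

Lemma level_down_layer b C : level b C -> exists e, valid e /\ C = down e.
Proof. intros [e [ve [_ ->]]]. eauto. Qed.

Lemma level_closed b C : level b C -> is_closed scott_opens C.
Proof. intros [e [ve [_ ->]]]. apply down_closed, ve. Qed.

Lemma level_down_inv b e : valid e -> level b (down e) -> below_level (stage e) b.
Proof. intros ve [e' [ve' [hb he]]]. rewrite (down_inj _ _ ve ve' he). exact hb. Qed.

Lemma ext_lt_trans a b c : ext_lt lt a b -> ext_lt lt b c -> ext_lt lt a c.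
Proof. destruct a, b, c; simpl; try tauto. apply wo_trans. Qed.

Lemma ext_lt_total a b : ext_lt lt a b \/ a = b \/ ext_lt lt b a.
Proof.
  destruct a as [a| |], b as [b| |]; simpl; auto.
  destruct (wo_total a b) as [h|[->|h]]; auto.
Qed.

Lemma below_level_cofinal_sup D s j i : (forall d, D d -> below_level (stage d) j) ->
  stage_cofinal D s -> ext_lt lt j i -> below_level (stage s) i.
Proof.
  intros hD hcof hji. destruct (stage s) as [u|] eqn:hs; [simpl|exact I].
  assert (hju : ~ ext_lt lt j (Old u)).
  { destruct j as [g| |]; simpl; [|tauto|tauto]. intros hgu.
    destruct (hcof g) as [d [hd hgd]]; [rewrite hs; exact hgu|].
    exact (below_level_stage_le_false _ _ (hD d hd) hgd). }
  destruct (ext_lt_total (Old u) i) as [h|[<-|h]]; [exact h | contradiction|].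
  contradiction (hju (ext_lt_trans _ _ _ hji h)).
Qed.

Lemma below_level_Old s u : stage_lt s (Some u) -> below_level s (Old u).
Proof. destruct s; simpl; auto. Qed.

Definition down_image (P : tree W -> Prop) : set (set point) :=
  fun Z => exists c, P c /\ Z = down c.

Lemma union_down_image (P : tree W -> Prop) :
  (fun x => exists E, down_image P E /\ E x) = (fun x => exists d, P d /\ down d x).
Proof.
  apply set_ext; intros x; split.
  - intros [E [[c [hc ->]] hx]]. eauto.
  - intros [d [hd hx]]. exists (down d). split; [exists d|]; auto.
Qed.

Lemma down_node_closure_children v q u : valid_path v q -> path_stage v q = Some u ->
  down (tree_node v q) =
  closure scott_opens (fun x => exists E, down_image (children v q) E /\ E x).
Proof.
  intros hv hs. destruct (children_directed_sup v q u hv hs) as [hD hsup].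
  rewrite union_down_image. symmetry. apply closure_directed_union; auto.
Qed.

Lemma level_bottom i : ~ (exists j, ext_lt lt j i) -> level i = layer0 scott_opens.
Proof.
  intros hmin. apply set_ext; intros C; split.
  - intros [e [ve [hs ->]]]. destruct (stage e) as [u|] eqn:he.
    + contradiction hmin. exists (Old u). exact hs.
    + exists (exist _ e (conj ve he)). rewrite closure_point. reflexivity.
  - intros [x ->]. rewrite closure_point. exists (proj1_sig x).
    split; [apply (proj2_sig x)|]. split; [rewrite (proj2 (proj2_sig x)); exact I | reflexivity].
Qed.

Lemma level_sub_Dop_pred j i C :
  imm_pred (ext_lt lt) j i -> level i C -> Dop scott_opens (level j) C.
Proof.
  intros [hji hnk] [e [ve [hs ->]]].
  destruct (classic (below_level (stage e) j)) as [h|h].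
  - exists (fun Z => Z = down e). split.
    + split; [|split].
      * intros Z ->. exists e. auto.
      * exists (down e). reflexivity.
      * intros a b -> ->. exists (down e). split; [reflexivity|].
        split; intros W0 _ h0; exact h0.
    + replace (fun x => exists E, E = down e /\ E x) with (down e).
      * symmetry. apply closure_of_closed, down_closed, ve.
      * apply set_ext; intros x; split; [eauto|]. intros [E [-> hx]]; exact hx.
  - destruct (stage e) as [u|] eqn:hu; [|contradiction h; exact I]. simpl in hs, h.
    assert (hj : j = Old u).
    { destruct (ext_lt_total j (Old u)) as [h1|[h1|h1]]; [|exact h1|contradiction].
      contradiction hnk. exists (Old u). auto. }
    subst j. destruct e as [|v q]; [discriminate|]. simpl in hu, ve.
    destruct (children_directed_sup v q u ve hu) as [[_ [hval hdir]] _].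
    assert (hmem : forall c, children v q c -> level (Old u) (down c)).
    { intros c hc. exists c. split; [exact (hval c hc)|split; [|reflexivity]].
      destruct hc as [s [n [-> hsn]]]. rewrite hu in hsn. exact (below_level_Old _ _ hsn). }
    exists (down_image (children v q)). split.
    + split; [|split].
      * intros Z [c [hc ->]]. auto.
      * destruct (children_directed_sup v q u ve hu) as [[[c hc] _] _]. exists (down c), c. auto.
      * intros a b [c1 [h1 ->]] [c2 [h2 ->]]. destruct (hdir c1 c2 h1 h2) as [c3 [h3 [l1 l2]]].
        exists (down c3). split; [exists c3; auto|].
        split; apply incl_spec_le; auto; intros x hx; eapply tree_le_trans; eauto.
    + apply (down_node_closure_children v q u); auto.
Qed.

Lemma Dop_sub_level j i C : ext_lt lt j i -> Dop scott_opens (level j) C -> level i C.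
Proof.
  intros hji [F [[hmem [hne hdir]] ->]].
  destruct (closure_down_family F) as [_ [s [-> [hs hcof]]]].
  - intros Z hZ. exact (level_down_layer _ _ (hmem Z hZ)).
  - exact hne.
  - intros Z1 Z2 h1 h2. destruct (hdir _ _ h1 h2) as [Z3 [h3 [l1 l2]]].
    exists Z3. split; [exact h3|].
    split; apply (spec_le_incl scott_opens (level j)); auto; apply (level_closed j), hmem, h3.
  - exists s. split; [apply hs|]. split; [|reflexivity].
    apply (below_level_cofinal_sup (down_preimage F) s j i); auto.
    intros d [vd hd]. exact (level_down_inv _ _ vd (hmem _ hd)).
Qed.

Lemma level_limit i : (exists j, ext_lt lt j i) -> ~ (exists j, imm_pred (ext_lt lt) j i) ->
  level i = fun C => exists j, ext_lt lt j i /\ level j C.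
Proof.
  intros [j hj] hlim. apply set_ext; intros C; split.
  - intros [e [ve [hs ->]]]. destruct (stage e) as [u|] eqn:hu.
    + destruct (classic (exists k, ext_lt lt (Old u) k /\ ext_lt lt k i)) as [[k [h1 h2]]|hno].
      * exists k. split; [exact h2|]. exists e. rewrite hu. auto.
      * contradiction hlim. exists (Old u). split; [exact hs | exact hno].
    + exists j. split; [exact hj|]. exists e. rewrite hu. simpl. auto.
  - intros [k [hk [e [ve [hs ->]]]]]. exists e. split; [exact ve|]. split; [|reflexivity].
    destruct (stage e); [exact (ext_lt_trans _ _ _ hs hk) | exact I].
Qed.

Lemma levels_D_hierarchy : is_D_hierarchy scott_opens (ext_lt lt) level.
Proof.
  intros i. split; [|split].
  - apply level_bottom.
  - intros j hj. apply set_ext; intros C; split.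
    + apply level_sub_Dop_pred, hj.
    + apply Dop_sub_level, hj.
  - apply level_limit.
Qed.

Lemma level_Top1 : level Top1 = level Top.
Proof.
  apply set_ext; intros C. split; intros [e [ve [hs ->]]];
    exists e; repeat split; auto; destruct (stage e); exact I.
Qed.

Definition mapped_children (h : set point -> set point) v q : set (set point) :=
  fun Z => exists c, children v q c /\ Z = h (down c).

Lemma layer_map_down_node (Y1 Y2 : set (set point)) (h : set point -> set point) v q u :
  (forall C, Y2 C -> exists e, valid e /\ C = down e) ->
  (forall C, Y1 C -> Y2 (h C)) -> layer_continuous scott_opens Y1 Y2 h ->
  valid_path v q -> path_stage v q = Some u ->
  Y1 (down (tree_node v q)) -> (forall c, children v q c -> Y1 (down c)) ->
  tree_directed (down_preimage (mapped_children h v q)) /\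
  exists s, h (down (tree_node v q)) = down s /\
    is_tree_sup (down_preimage (mapped_children h v q)) s /\
    stage_cofinal (down_preimage (mapped_children h v q)) s.
Proof.
  intros hY2 h_maps h_cont hv hu hnode hch.
  assert (Y2_closed : forall C, Y2 C -> is_closed scott_opens C).
  { intros C hC. destruct (hY2 C hC) as [e [ve ->]]. apply down_closed, ve. }
  destruct (children_directed_sup v q u hv hu) as [[[c0 hc0] [hval hdir]] _].
  destruct (closure_down_family (mapped_children h v q)) as [hD [s [hcl hs]]].
  - intros Z [c [hc ->]]. apply hY2, h_maps, hch, hc.
  - exists (h (down c0)), c0. auto.
  - intros Z1 Z2 [c1 [h1 ->]] [c2 [h2 ->]]. destruct (hdir c1 c2 h1 h2) as [c3 [h3 [l1 l2]]].
    exists (h (down c3)). split; [exists c3; auto|].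
    split; apply (layer_map_mono scott_opens Y1 Y2 h); auto;
      intros x hx; eapply tree_le_trans; eauto.
  - assert (hF : forall E, down_image (children v q) E -> Y1 E) by (intros E [c [hc ->]]; auto).
    split; [exact hD|]. exists s. split; [|exact hs]. rewrite <- hcl.
    rewrite (layer_map_closure_union scott_opens Y1 Y2 h Y2_closed h_maps h_cont _ _
               scott_opens_topology hF hnode (down_node_closure_children v q u hv hu)).
    f_equal. apply set_ext; intros x; split.
    + intros [E [[D [[c [hc ->]] ->]] hx]]. exists (h (down c)). split; [exists c|]; auto.
    + intros [E [[c [hc ->]] hx]]. exists (h (down c)). split; [exists (down c)|]; auto.
      split; [exists c|]; auto.
Qed.

Lemma children_valid v q c : valid_path v q -> children v q c -> valid c.
Proof. intros hv [s [n [-> h]]]. split; assumption. Qed.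

Lemma children_neq v q c : children v q c -> c <> tree_node v q.
Proof.
  intros [s [n [-> _]]] e. injection e as e.
  apply (f_equal (@length _)) in e. simpl in e. lia.
Qed.

Section LevelHomeomorphism.
Variables (w : W) (i : ext W) (f g : set point -> set point).
Hypothesis f_maps : forall C, level (Old w) C -> level i (f C).
Hypothesis g_maps : forall C, level i C -> level (Old w) (g C).
Hypothesis gf : forall C, level (Old w) C -> g (f C) = C.
Hypothesis fg : forall C, level i C -> f (g C) = C.
Hypothesis f_cont : layer_continuous scott_opens (level (Old w)) (level i) f.
Hypothesis g_cont : layer_continuous scott_opens (level i) (level (Old w)) g.

(** Points are compact in the tree while nodes of positive stage are sups of
    chains without maximum, so a homeomorphism maps points to points. *)
Lemma level_map_point e : valid e -> stage e = None ->
  exists e', valid e' /\ f (down e) = down e' /\ stage e' = None.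
Proof.
  intros ve he.
  assert (hlev : level (Old w) (down e)) by (exists e; rewrite he; repeat split; auto).
  destruct (level_down_layer _ _ (f_maps _ hlev)) as [e'' [ve'' hfe]].
  exists e''. split; [exact ve''|]. split; [exact hfe|].
  destruct (stage e'') as [u|] eqn:hu; [exfalso|reflexivity].
  destruct e'' as [|v q]; [discriminate|]. simpl in hu, ve''.
  assert (hnode : level i (down (tree_node v q))) by (rewrite <- hfe; auto).
  pose proof (level_down_inv i (tree_node v q) ve'' hnode) as hb. simpl in hb. rewrite hu in hb.
  assert (hch : forall c, children v q c -> level i (down c)).
  { intros c hc. exists c. split; [exact (children_valid v q c ve'' hc)|].
    split; [|reflexivity]. destruct hc as [s [n [-> hsn]]]. rewrite hu in hsn.
    exact (below_level_child _ _ _ hsn hb). }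
  destruct (layer_map_down_node (level i) (level (Old w)) g v q u (level_down_layer _)
              g_maps g_cont ve'' hu hnode hch) as [hD [s [hgs [hsup _]]]].
  rewrite <- hfe, (gf _ hlev) in hgs.
  apply down_inj in hgs; [|exact ve | apply hsup]. subst s.
  destruct (point_sup_mem _ e he hD hsup) as [_ [c [hc hgc]]].
  assert (hfc : f (down e) = down c) by (rewrite hgc; apply fg, hch, hc).
  rewrite hfe in hfc.
  apply down_inj in hfc; [|exact ve'' | exact (children_valid v q c ve'' hc)].
  exact (children_neq v q c hc (eq_sym hfc)).
Qed.

Lemma level_map_stage_le e : valid e -> below_level (stage e) (Old w) ->
  exists e', valid e' /\ f (down e) = down e' /\ stage_le (stage e') (stage e).
Proof.
  remember (stage e) as s eqn:hs. revert e hs.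
  induction s as [s IH] using (well_founded_induction stage_lt_wf).
  intros e hs ve hb. destruct s as [u|].
  - destruct e as [|v q]; [discriminate|]. simpl in hs, ve. symmetry in hs.
    assert (hch_below : forall c, children v q c -> below_level (stage c) (Old w)).
    { intros c [s' [n [-> hsn]]]. rewrite hs in hsn. exact (below_level_child _ _ _ hsn hb). }
    assert (hch : forall c, children v q c -> level (Old w) (down c)).
    { intros c hc. exists c. split; [exact (children_valid v q c ve hc) | auto]. }
    assert (hnode : level (Old w) (down (tree_node v q)))
      by (exists (tree_node v q); simpl; rewrite hs; auto).
    destruct (layer_map_down_node (level (Old w)) (level i) f v q u (level_down_layer _)
                f_maps f_cont ve hs hnode hch) as [_ [s [hfs [hsup hcof]]]].
    exists s. split; [apply hsup|]. split; [exact hfs|].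
    destruct (stage_lt_or_le (Some u) (stage s)) as [h|h]; [exfalso|exact h].
    destruct (hcof u h) as [d [[vd [c [hc hdc]]] hud]].
    pose proof hc as [s0 [n0 [-> hs0]]]. rewrite hs in hs0.
    destruct (IH s0 hs0 (tree_node v ((s0, n0) :: q))) as [c' [vc' [hfc hc']]];
      [reflexivity | split; [exact ve|]; rewrite hs; exact hs0 | exact (hch_below _ hc) |].
    rewrite hfc in hdc. apply down_inj in hdc; [subst c' | exact vd | exact vc'].
    exact (stage_le_lt_false _ _ hud (stage_le_lt_trans _ _ _ hc' hs0)).
  - destruct (level_map_point e ve (eq_sym hs)) as [e' [ve' [hfe he']]].
    exists e'. rewrite he'. split; [|split]; [exact ve' | exact hfe | left; reflexivity].
Qed.

End LevelHomeomorphism.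

Lemma level_not_homeomorphic_later w i :
  ext_lt lt (Old w) i -> ~ homeomorphic scott_opens (level (Old w)) (level i).
Proof.
  intros hwi [f [g [f_maps [g_maps [gf [fg [f_cont g_cont]]]]]]].
  set (N := down (tree_node w [])).
  assert (hN : level i N) by (exists (tree_node w []); simpl; auto).
  destruct (level_down_layer _ _ (g_maps N hN)) as [e [ve he]].
  pose proof (g_maps N hN) as hgN. rewrite he in hgN.
  pose proof (level_down_inv _ _ ve hgN) as hb.
  destruct (level_map_stage_le w i f g f_maps g_maps gf fg f_cont g_cont e ve hb)
    as [e' [ve' [hfe hse]]].
  rewrite <- he, (fg N hN) in hfe. apply down_inj in hfe; [subst e' | exact I | exact ve'].
  exact (below_level_stage_le_false _ _ hb hse).
Qed.

End Construction.

Theorem mainTheorem16 :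
  forall (W : Type) (lt : W -> W -> Prop), is_wellorder lt ->
  exists (X : Type) (O : set (set X)),
    is_topology O /\ T0 O /\ irreducible O /\ rank_d_is O lt.
Proof.
  intros W lt hwo. exists (point lt), (scott_opens lt).
  split; [apply scott_opens_topology|].
  split; [apply scott_T0, hwo|].
  split; [apply scott_irreducible|].
  exists (level lt). split; [apply levels_D_hierarchy, hwo|]. split.
  - rewrite level_Top1. apply homeomorphic_refl.
  - intros w i [hwi _]. apply level_not_homeomorphic_later; assumption.
Qed.
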